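(* Let $E$, $(s^1,s^0)$, $M$ be as in the context. (a) For every $z\in Z^2_{\mathrm{pt}}(E,M)$: $z^{\mathrm{std}}_M([m])=0$ and $z^{\mathrm{std}}_G(g[\bar g]^{-1},[\bar g])=0$ for all $m\in M_E$, $g\in G_E$. (b) $Z^2_{\mathrm{st}}(E,M)=\{z\in Z^2_{\mathrm{pt}}(E,M): z_M([m])=0\text{ and }z_G(g[\bar g]^{-1},[\bar g])=0\ \forall m\in M_E,g\in G_E\}$; in particular $z^{\mathrm{std}}$ is standard for every $z\in Z^2_{\mathrm{pt}}(E,M)$. (c) The inclusion $Z^2_{\mathrm{st}}(E,M)\to Z^2_{\mathrm{pt}}(E,M)$ and the map $z\mapsto z^{\mathrm{std}}$ induce mutually inverse isomorphisms between $H^2_{\mathrm{st}}(E,M)$ and $H^2_{\mathrm{pt}}(E,M)$; in particular $H^2(E,M)\cong H^2_{\mathrm{st}}(E,M)$.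
   Context: Let $\Pi_0$ be a group, $\Pi_1$ an abelian $\Pi_0$-module (multiplicative), $M$ an abelian $\Pi_0$-module. A crossed module extension $E$ of $\Pi_0$ with $\Pi_1$: crossed module $(G_E,M_E,\mu)$ (left action ${}^gm$, $\mu({}^gm)=g\mu(m)g^{-1}$, ${}^{\mu(n)}m=nmn^{-1}$) with monomorphism $\iota:\Pi_1\to M_E$ and epimorphism $\pi:G_E\to\Pi_0$, $\Pi_1\to M_E\to G_E\to\Pi_0$ exact, ${}^g\iota(k)=\iota(\pi(g)k)$. $\bar g:=\pi(g)$; $M$ is a $G_E$-module via $\pi$. A section system: $s^0:\Pi_0\to G_E$, $s^0(1)=1$, $\pi s^0=\mathrm{id}$; $s^1:\mu(M_E)\to M_E$, $s^1(1)=1$, $\mu s^1=\mathrm{id}$. Notation $[p]=s^0(p)$, $[x]=s^1(x)$ for $x\in\mu(M_E)$, $[m]=s^1(\mu(m))$ for $m\in M_E$. Cochains: $C^1(E,M)=\mathrm{Map}(G_E,M)$, $C^2(E,M)=\mathrm{Map}(M_E\times G_E\times G_E,M)$; $d$ on $C^1$: $(dc)(m,h,g)=c(\mu(m)h)-c(hg)+\bar h c(g)$; on $C^2$: $(dc)(p,n,k,m,h,g)=c(p,\mu(n)k,\mu(m)h)-c(pn,k,hg)+c(n\,{}^km,kh,g)-\bar k\cdot c(m,h,g)$; $H^2(E,M)$ is the resulting cohomology. Pointed: $c(1)=0$, resp. $c(1,1,1)=0$; $Z^2_{\mathrm{pt}}$, $B^2_{\mathrm{pt}}$ the pointed cocycles/coboundaries,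 $H^2_{\mathrm{pt}}=Z^2_{\mathrm{pt}}/B^2_{\mathrm{pt}}$. $c_M(m)=c(m,1,1)$, $c_G(h,g)=c(1,h,g)$, and for $m\in M_E$, $c_G(m,h):=c_G(\mu(m),h)$. For $z\in Z^2_{\mathrm{pt}}(E,M)$: $\sigma_z(g)=z([g[\bar g]^{-1}],[\bar g],1)$, $z^{\mathrm{std}}=z-d\sigma_z$; $z$ is standard if $z^{\mathrm{std}}=z$. $Z^2_{\mathrm{st}}(E,M)$ = standard pointed cocycles, $B^2_{\mathrm{st}}(E,M)=\{b\in B^2_{\mathrm{pt}}(E,M):b^{\mathrm{std}}=b\}$, $H^2_{\mathrm{st}}=Z^2_{\mathrm{st}}/B^2_{\mathrm{st}}$. *)

(* abstract (possibly infinite) groups are given as explicit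
   records with their axioms; the coefficient module M is a zmodType. *)
From HB Require Import structures.
From mathcomp Require Import all_boot all_algebra.
Set Implicit Arguments. Unset Strict Implicit. Unset Printing Implicit Defensive.
Import GRing.Theory.
Local Open Scope ring_scope.

Record group := Group {
  gcar :> Type;
  gmul : gcar -> gcar -> gcar;
  gone : gcar;
  ginv : gcar -> gcar;
  gmulA : forall x y z, gmul x (gmul y z) = gmul (gmul x y) z;
  gmul1g : forall x, gmul gone x = x;
  gmulg1 : forall x, gmul x gone = x;
  gmulVg : forall x, gmul (ginv x) x = gone;
  gmulgV : forall x, gmul x (ginv x) = gone
}.
Arguments gone {g}.

Definition is_hom (A B : group) (f : A -> B) :=
  forall x y, f (gmul x y) = gmul (f x) (f y).

Record pimod (P0 : group) := PiMod {
  P1 : group;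
  P1_comm : forall x y : P1, gmul x y = gmul y x;
  P1act : P0 -> P1 -> P1;
  P1act1 : forall k, P1act gone k = k;
  P1actM : forall p q k, P1act (gmul p q) k = P1act p (P1act q k);
  P1actmul : forall p k l, P1act p (gmul k l) = gmul (P1act p k) (P1act p l)
}.

(* A crossed module extension E of Pi0 with Pi1:
   Pi1 --iota--> M_E --mu--> G_E --pi--> Pi0, exact, iota mono, pi epi. *)
Record xext (P0 : group) (Pi : pimod P0) := XExt {
  GE : group;
  ME : group;
  xact : GE -> ME -> ME;
  mu : ME -> GE;
  iota : P1 Pi -> ME;
  epi : GE -> P0;
  xact1 : forall m, xact gone m = m;
  xactM : forall g h m, xact (gmul g h) m = xact g (xact h m);
  xactmul : forall g m n, xact g (gmul m n) = gmul (xact g m) (xact g n);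
  mu_hom : is_hom mu;
  mu_xact : forall g m, mu (xact g m) = gmul (gmul g (mu m)) (ginv g);
  peiffer : forall n m, xact (mu n) m = gmul (gmul n m) (ginv n);
  iota_hom : is_hom iota;
  pi_hom : is_hom epi;
  iota_inj : forall k l, iota k = iota l -> k = l;
  pi_surj : forall p, exists g, epi g = p;
  exact_ME : forall m, mu m = gone <-> exists k, m = iota k;
  exact_GE : forall g, epi g = gone <-> exists m, g = mu m;
  xact_iota : forall g k, xact g (iota k) = iota (@P1act P0 Pi (epi g) k)
}.

Arguments xact {P0 Pi} x _ _.
Arguments mu {P0 Pi} x _.
Arguments iota {P0 Pi} x _.
Arguments epi {P0 Pi} x _.

Definition is_modact (P0 : group) (V : zmodType) (act : P0 -> V -> V) :=
  [/\ forall v, act gone v = v,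
      forall p q v, act (gmul p q) v = act p (act q v)
    & forall p v w, act p (v + w) = act p v + act p w].

(* Section system: s0 : Pi0 -> G_E, s1 : mu(M_E) -> M_E.  s1 is encoded as a
   total function G_E -> M_E whose values outside mu(M_E) are irrelevant. *)
Record sections P0 (Pi : pimod P0) (E : xext Pi) := Sections {
  s0 : P0 -> GE E;
  s1 : GE E -> ME E;
  s0_1 : s0 gone = gone;
  pi_s0 : forall p, epi E (s0 p) = p;
  s1_1 : s1 gone = gone;
  mu_s1 : forall m, mu E (s1 (mu E m)) = mu E m
}.

Arguments s0 {P0 Pi E} s _.
Arguments s1 {P0 Pi E} s _.

Section Cochains.
Variables (P0 : group) (Pi : pimod P0) (E : xext Pi)
          (V : zmodType) (act : P0 -> V -> V).

Definition C1 := GE E -> V.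
Definition C2 := ME E -> GE E -> GE E -> V.

Definition d1 (c : C1) : C2 := fun m h g =>
  c (gmul (mu E m) h) - c (gmul h g) + act (epi E h) (c g).

Definition d2 (c : C2) :
  ME E -> ME E -> GE E -> ME E -> GE E -> GE E -> V :=
  fun p n k m h g =>
    c p (gmul (mu E n) k) (gmul (mu E m) h) - c (gmul p n) k (gmul h g)
    + c (gmul n (xact E k m)) (gmul k h) g - act (epi E k) (c m h g).

Definition Z2 (c : C2) := forall p n k m h g, d2 c p n k m h g = 0.
Definition B2 (c : C2) := exists c1 : C1, forall m h g, c m h g = d1 c1 m h g.
Definition pointed1 (c : C1) := c gone = 0.
Definition pointed2 (c : C2) := c gone gone gone = 0.
Definition Z2pt (c : C2) := Z2 c /\ pointed2 c.
Definition B2pt (c : C2) :=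
  exists c1 : C1, pointed1 c1 /\ forall m h g, c m h g = d1 c1 m h g.

Variable S : sections E.

Definition gcorr (g : GE E) : GE E := gmul g (ginv (s0 S (epi E g))).

Definition sigma (z : C2) : C1 := fun g =>
  z (s1 S (gcorr g)) (s0 S (epi E g)) gone.

Definition std (z : C2) : C2 := fun m h g => z m h g - d1 (sigma z) m h g.

Definition standard (z : C2) := forall m h g, std z m h g = z m h g.
Definition Z2st (z : C2) := Z2pt z /\ standard z.
Definition B2st (b : C2) := B2pt b /\ standard b.

Definition addC2 (z z' : C2) : C2 := fun m h g => z m h g + z' m h g.
Definition subC2 (z z' : C2) : C2 := fun m h g => z m h g - z' m h g.

End Cochains.

From HB Require Import structures.
From mathcomp Require Import all_boot all_algebra.
Import GRing.Theory.
Local Open Scope ring_scope.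

(* The cocycle identity at (1, n, 1, 1, [gbar], 1), with mu n = g [gbar]^-1,
   expresses sigma_z(g) through z_G(1, [gbar]), z_M([g [gbar]^-1]) and
   z_G(g [gbar]^-1, [gbar]).  Hence z - d sigma_z kills the values z_M([m]) and
   z_G(g [gbar]^-1, [gbar]), and sigma_z vanishes as soon as these values (and
   z(1,1,1)) do.  So z |-> z^std is a projection onto the standard cocycles which
   changes every cocycle only by the coboundary d sigma_z; all comparisons of the
   cohomology groups follow. *)

(* No ring tactic applies to a bare zmodType: cancel each atom against its
   opposite. *)
Ltac zmod_cancel :=
  apply/eqP; rewrite -subr_eq0; apply/eqP;
  rewrite -[LHS]add0r ?opprD ?opprK ?addrA;
  repeat match goal with
  | |- context [- ?t] => rewrite ?(addrAC _ t) ?(addrAC _ (- t)) addrK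
  end;
  by rewrite ?subr0.

Lemma ginv1 (G : group) : ginv (@gone G) = gone.
Proof. by rewrite -[LHS]gmulg1 gmulVg. Qed.

Lemma hom1 {A B : group} {f : A -> B} : is_hom f -> f gone = gone.
Proof.
move=> fM; have f11 := fM gone gone; rewrite gmul1g in f11.
by rewrite -[LHS]gmul1g -(gmulVg (f gone)) -gmulA -f11.
Qed.

Lemma homV {A B : group} {f : A -> B} x : is_hom f -> f (ginv x) = ginv (f x).
Proof.
move=> fM; rewrite -[LHS]gmul1g -(gmulVg (f x)) -gmulA -fM gmulgV (hom1 fM).
exact: gmulg1.
Qed.

Section Extension.
Context {P0 : group} {Pi : pimod P0} {E : xext Pi}.

Lemma mu1 : mu E gone = gone.
Proof. exact: hom1 (@mu_hom _ _ E). Qed.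

Lemma epi1 : epi E gone = gone.
Proof. exact: hom1 (@pi_hom _ _ E). Qed.

Lemma xactg1 g : xact E g gone = gone.
Proof. exact: hom1 (xactmul g). Qed.

Lemma epi_mu m : epi E (mu E m) = gone.
Proof. by apply/exact_GE; exists m. Qed.

Lemma epi_mu_mul m g : epi E (gmul (mu E m) g) = epi E g.
Proof. by rewrite pi_hom epi_mu gmul1g. Qed.

Lemma mu_xact_mul n k m h :
  gmul (mu E (gmul n (xact E k m))) (gmul k h)
  = gmul (gmul (mu E n) k) (gmul (mu E m) h).
Proof. by rewrite mu_hom mu_xact -!gmulA (gmulA (ginv k)) gmulVg gmul1g. Qed.

Variable S : sections E.

Lemma gcorrK g : gmul (gcorr S g) (s0 S (epi E g)) = g.
Proof. by rewrite /gcorr -gmulA gmulVg gmulg1. Qed.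

Lemma epi_gcorr g : epi E (gcorr S g) = gone.
Proof. by rewrite pi_hom (homV _ (@pi_hom _ _ E)) pi_s0 gmulgV. Qed.

Lemma mu_s1_gcorr g : mu E (s1 S (gcorr S g)) = gcorr S g.
Proof. by have [n ->] := proj1 (exact_GE _) (epi_gcorr g); rewrite mu_s1. Qed.

End Extension.

Section ModuleAction.
Context {P0 : group} {V : zmodType} {act : P0 -> V -> V}.
Hypothesis Hact : is_modact act.

Lemma modact1 v : act gone v = v.
Proof. by case: Hact. Qed.

Lemma modactM p q v : act (gmul p q) v = act p (act q v).
Proof. by case: Hact. Qed.

Lemma modactD p v w : act p (v + w) = act p v + act p w.
Proof. by case: Hact. Qed.

Lemma modact0 p : act p 0 = 0.
Proof. by apply/(addrI (act p 0)); rewrite -modactD !addr0. Qed.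

Lemma modactN p v : act p (- v) = - act p v.
Proof. by apply/(addrI (act p v)); rewrite -modactD !subrr modact0. Qed.

End ModuleAction.

Section Cochains.
Context {P0 : group} {Pi : pimod P0} {E : xext Pi} {V : zmodType}
        {act : P0 -> V -> V}.
Hypothesis Hact : is_modact act.
Implicit Types (c : C1 E V) (z w : C2 E V).

Lemma d1_add c c' m h g :
  d1 act (fun x => c x + c' x) m h g = d1 act c m h g + d1 act c' m h g.
Proof. rewrite /d1 (modactD Hact); zmod_cancel. Qed.

Lemma d1_opp c m h g : d1 act (fun x => - c x) m h g = - d1 act c m h g.
Proof. by rewrite /d1 (modactN Hact) !opprD. Qed.

Lemma d1_111 c : d1 act c gone gone gone = c gone.
Proof. by rewrite /d1 mu1 !gmul1g epi1 (modact1 Hact) subrr add0r. Qed.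

Lemma d2_sub z w p n k m h g :
  d2 act (subC2 z w) p n k m h g = d2 act z p n k m h g - d2 act w p n k m h g.
Proof. rewrite /d2 /subC2 (modactD Hact) (modactN Hact); zmod_cancel. Qed.

Lemma Z2_d1 c : Z2 act (d1 act c).
Proof.
move=> p n k m h g; rewrite /d2 /d1 mu_xact_mul mu_hom !epi_mu_mul pi_hom.
rewrite (modactM Hact) !(modactD Hact) !(modactN Hact) !gmulA; zmod_cancel.
Qed.

Lemma Z2_sub z w : Z2 act z -> Z2 act w -> Z2 act (subC2 z w).
Proof. by move=> Hz Hw p n k m h g; rewrite d2_sub Hz Hw subrr. Qed.

Lemma Z2_B2 z : B2 act z -> Z2 act z.
Proof. by case=> c Hc p n k m h g; rewrite /d2 !Hc; apply: Z2_d1. Qed.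

Section Cocycle.
Variable z : C2 E V.
Hypothesis Hz : Z2 act z.

Lemma Z2_n1s n s : z n gone s = z n gone gone.
Proof.
apply/esym/subr0_eq; rewrite -(Hz n gone gone gone gone s) /d2.
rewrite mu1 epi1 !gmul1g xact1 gmulg1 (modact1 Hact); zmod_cancel.
Qed.

Lemma Z2_ns1 n s :
  z n s gone = z gone s gone + z n gone gone - z gone (mu E n) s.
Proof.
apply/subr0_eq; rewrite -(Hz gone n gone gone s gone) /d2 -(Z2_n1s n s).
rewrite mu1 epi1 !gmul1g xact1 !gmulg1 (modact1 Hact); zmod_cancel.
Qed.

Lemma Z2pt_1k1 k : pointed2 z -> z gone k gone = 0.
Proof.
move=> Hp; apply/esym; rewrite -(Hz gone gone k gone gone gone) /d2.
rewrite mu1 !gmul1g xactg1 !gmulg1 Hp (modact0 Hact); zmod_cancel.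
Qed.

End Cocycle.

Variable S : sections E.

Lemma sigma_epi1 z x : epi E x = gone -> sigma S z x = z (s1 S x) gone gone.
Proof. by move=> x1; rewrite /sigma /gcorr x1 s0_1 ginv1 gmulg1. Qed.

Lemma sigma1 z : sigma S z gone = z gone gone gone.
Proof. by rewrite sigma_epi1 ?epi1 // s1_1. Qed.

Lemma sigma_s0 z p : sigma S z (s0 S p) = z gone (s0 S p) gone.
Proof. by rewrite /sigma /gcorr pi_s0 gmulgV s1_1. Qed.

Lemma sigmaE z g : Z2 act z ->
  sigma S z g = z gone (s0 S (epi E g)) gone + z (s1 S (gcorr S g)) gone gone
                - z gone (gcorr S g) (s0 S (epi E g)).
Proof. by move=> Hz; rewrite /sigma Z2_ns1 // mu_s1_gcorr. Qed.

Lemma std_pointed z : pointed2 (std act S z).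
Proof. by rewrite /pointed2 /std d1_111 sigma1 subrr. Qed.

Lemma std_s1 z m : std act S z (s1 S (mu E m)) gone gone = 0.
Proof.
rewrite /std /d1 mu_s1 gmulg1 gmul1g epi1 (modact1 Hact).
by rewrite sigma_epi1 ?epi_mu // subrK subrr.
Qed.

Lemma std_gcorr z g : Z2 act z ->
  std act S z gone (gcorr S g) (s0 S (epi E g)) = 0.
Proof.
move=> Hz; rewrite /std /d1 mu1 gmul1g epi_gcorr (modact1 Hact) gcorrK.
rewrite sigma_epi1 ?epi_gcorr // sigma_s0 sigmaE //; zmod_cancel.
Qed.

Lemma Z2_std z : Z2 act z -> Z2 act (std act S z).
Proof. by move=> Hz; apply: Z2_sub => //; apply: Z2_d1. Qed.

Lemma sigma_eq0 z : Z2pt act z ->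
  (forall m, z (s1 S (mu E m)) gone gone = 0) ->
  (forall g, z gone (gcorr S g) (s0 S (epi E g)) = 0) ->
  forall g, sigma S z g = 0.
Proof.
move=> [Hz Hp] zM zG g; rewrite sigmaE // zG Z2pt_1k1 //.
by have [n ->] := proj1 (exact_GE _) (epi_gcorr S g); rewrite zM subr0 addr0.
Qed.

Lemma standard_sigma0 z : (forall g, sigma S z g = 0) -> standard act S z.
Proof. by move=> z0 m h g; rewrite /std /d1 !z0 (modact0 Hact) subrr add0r subr0. Qed.

Lemma Z2st_std z : Z2 act z -> Z2st act S (std act S z).
Proof.
move=> Hz; have Hzs : Z2pt act (std act S z) := conj (Z2_std z Hz) (std_pointed z).
split=> //; apply/standard_sigma0/sigma_eq0 => // [m|g].
  exact: std_s1.
exact: std_gcorr.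
Qed.

Lemma Z2stP z : Z2st act S z <->
  [/\ Z2pt act z, forall m, z (s1 S (mu E m)) gone gone = 0
    & forall g, z gone (gcorr S g) (s0 S (epi E g)) = 0].
Proof.
split=> [[[Hz Hp] Hst] | [Hzp zM zG]].
  by split=> [//|m|g]; rewrite -Hst ?std_s1 ?std_gcorr.
by split=> //; apply/standard_sigma0/sigma_eq0.
Qed.

Lemma std_add z z' m h g :
  std act S (addC2 z z') m h g = addC2 (std act S z) (std act S z') m h g.
Proof. rewrite /std /addC2 (d1_add (sigma S z) (sigma S z')); zmod_cancel. Qed.

Lemma B2st_std b : B2pt act b -> B2st act S (std act S b).
Proof.
case=> c [c1 Hb]; have Hz : Z2 act b by apply: Z2_B2; exists c.
split; last by case: (Z2st_std b Hz).
exists (fun x => c x - sigma S b x); split.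
  by rewrite /pointed1 sigma1 Hb d1_111 c1 sub0r oppr0.
by move=> m h g; rewrite d1_add d1_opp /std Hb.
Qed.

Lemma B2st_sub_std z : standard act S z -> B2st act S (subC2 (std act S z) z).
Proof.
move=> Hst; have z0 m h g : subC2 (std act S z) z m h g = 0.
  by rewrite /subC2 Hst subrr.
split; last by apply: standard_sigma0 => g; rewrite /sigma z0.
exists (fun=> 0); split=> // m h g.
by rewrite z0 /d1 (modact0 Hact) subrr add0r.
Qed.

Lemma B2pt_sub_std z : pointed2 z -> B2pt act (subC2 (std act S z) z).
Proof.
move=> Hp; exists (fun x => - sigma S z x); split.
  by rewrite /pointed1 sigma1 Hp oppr0.
by move=> m h g; rewrite d1_opp /subC2 /std addrAC subrr add0r.
Qed.

Lemma B2_sub_std z : B2 act (subC2 z (std act S z)).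
Proof. by exists (sigma S z) => m h g; rewrite /subC2 /std subKr. Qed.

Lemma B2st_B2 z : pointed2 z -> standard act S z -> B2 act z -> B2st act S z.
Proof.
move=> Hp Hst [c Hc]; split=> //; exists c; split=> //.
by rewrite /pointed1 -d1_111 -Hc.
Qed.

End Cochains.

Theorem corollary4p5 (P0 : group) (Pi : pimod P0) (E : xext Pi)
  (V : zmodType) (act : P0 -> V -> V) (Hact : is_modact act)
  (S : sections E) :
  (* (a) *)
  (forall z : C2 E V, Z2pt act z ->
     (forall m : ME E, std act S z (s1 S (mu E m)) gone gone = 0) /\
     (forall g : GE E, std act S z gone (gcorr S g) (s0 S (epi E g)) = 0)) /\
  (* (b) *)
  (forall z : C2 E V, Z2st act S z <->
     [/\ Z2pt act z,
         forall m : ME E, z (s1 S (mu E m)) gone gone = 0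
       & forall g : GE E, z gone (gcorr S g) (s0 S (epi E g)) = 0]) /\
  (forall z : C2 E V, Z2pt act z -> Z2st act S (std act S z)) /\
  (* (c) H^2_st <-> H^2_pt : inclusion and z |-> z^std are well-defined
     homomorphisms on cocycles/coboundaries, and mutually inverse on classes *)
  (forall z : C2 E V, Z2st act S z -> Z2pt act z) /\
  (forall b : C2 E V, B2st act S b -> B2pt act b) /\
  (forall b : C2 E V, B2pt act b -> B2st act S (std act S b)) /\
  (forall z z' : C2 E V, forall m h g,
     std act S (addC2 z z') m h g = addC2 (std act S z) (std act S z') m h g) /\
  (forall z : C2 E V, Z2st act S z -> B2st act S (subC2 (std act S z) z)) /\
  (forall z : C2 E V, Z2pt act z -> B2pt act (subC2 (std act S z) z)) /\
  (* in particular H^2 <-> H^2_st, via the inclusion Z2st -> Z2 *)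
  (forall z : C2 E V, Z2st act S z -> Z2 act z) /\
  (forall b : C2 E V, B2st act S b -> B2 act b) /\
  (forall z : C2 E V, Z2st act S z -> B2 act z -> B2st act S z) /\
  (forall z : C2 E V, Z2 act z ->
     exists z' : C2 E V, Z2st act S z' /\ B2 act (subC2 z z')).
Proof.
split; first by move=> z [Hz _]; split=> [m|g]; [exact: std_s1 | exact: std_gcorr].
split; first exact: Z2stP.
split; first by move=> z [Hz _]; exact: Z2st_std.
split; first by move=> z [].
split; first by move=> b [].
split; first exact: B2st_std.
split; first exact: std_add.
split; first by move=> z [_ Hst]; exact: B2st_sub_std.
split; first by move=> z [_ Hp]; exact: B2pt_sub_std.
split; first by move=> z [[]].
split; first by move=> b [[c [_ Hc]] _]; exists c.
split; first by move=> z [[_ Hp] Hst]; exact: B2st_B2.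
by move=> z Hz; exists (std act S z); split; [exact: Z2st_std | exact: B2_sub_std].
Qed.
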